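(* Let $\mathcal L$ be a summable resource category (see context), let $l\in\mathcal L(X_0\otimes\cdots\otimes X_n,Y)$ and let $\mathcal M(l)=l\circ(\mathrm{der}_{X_0}\otimes\cdots\otimes\mathrm{der}_{X_n})\circ(m^n)^{-1}\in\mathcal L_!(X_0\&\cdots\&X_n,Y)$. Fix $i\in\{0,\dots,n\}$ and an object $Z$. Then $\mathcal M(l)\circ_!\lambda(X_0\&\cdots\&X_{i-1}\&0\&X_{i+1}\&\cdots\&X_n)=0$ (with $0\in\mathcal L(Z,X_i)$), and if $f_0,f_1\in\mathcal L(Z,X_i)$ are summable then the morphisms $\mathcal M(l)\circ_!\lambda(X_0\&\cdots\&f_j\&\cdots\&X_n)$ for $j=0,1$ are summable and $$\mathcal M(l)\circ_!\lambda(X_0\&\cdots\&(f_0+f_1)\&\cdots\&X_n)=\mathcal M(l)\circ_!\lambda(X_0\&\cdots\&f_0\&\cdots\&X_n)+\mathcal M(l)\circ_!\lambda(X_0\&\cdots\&f_1\&\cdots\&X_n).$$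
   Context: $\mathcal L$ is a symmetric monoidal category with finite products ($\&$), equipped with a resource comonad $(!,\mathrm{der},\mathrm{dig})$ and Seely isomorphisms; $m^n\in\mathcal L(!X_0\otimes\cdots\otimes!X_n,!(X_0\&\cdots\&X_n))$ denotes the induced $(n+1)$-ary Seely isomorphism. Kleisli category $\mathcal L_!$: $\mathcal L_!(X,Y)=\mathcal L(!X,Y)$, $g\circ_!f=g\circ!f\circ\mathrm{dig}_X$; $\lambda(h)=h\circ\mathrm{der}_X$ for $h\in\mathcal L(X,Y)$. $\mathcal L$ has zero morphisms and a summability structure $(S,\pi_0,\pi_1,\sigma)$: $\pi_0,\pi_1,\sigma:S\Rightarrow\mathrm{Id}$ natural, $\pi_0,\pi_1$ jointly monic, $f_0,f_1\in\mathcal L(X,Y)$ summable iff some (unique) $\langle f_0,f_1\rangle\in\mathcal L(X,SY)$ has $\pi_i\langle f_0,f_1\rangle=f_i$, with $f_0+f_1=\sigma\langle f_0,f_1\rangle$; the axioms of Ehrhard's coherent differentiation hold, in particular homsets are partial commutative monoids with neutral $0$, composition distributes over defined sums, $0$ is absorbing for composition and $\otimes$, and $\otimes$ distributes over defined sums (if $f_0,f_1$ summable then $g\otimes f_0,g\otimes f_1$ are summable with sum $g\otimes(f_0+f_1)$). Objects in place of morphisms denote identities. *)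

From mathcomp Require Import all_boot.

Set Implicit Arguments.
Unset Strict Implicit.
Unset Printing Implicit Defensive.

Record PreSRC := {
  Obj : Type;
  Hom : Obj -> Obj -> Type;
  cmp : forall {A B C : Obj}, Hom B C -> Hom A B -> Hom A C;
  idm : forall A : Obj, Hom A A;
  comp_assoc : forall A B C D (h : Hom C D) (g : Hom B C) (f : Hom A B),
      cmp h (cmp g f) = cmp (cmp h g) f;
  comp_idl : forall A B (f : Hom A B), cmp (idm B) f = f;
  comp_idr : forall A B (f : Hom A B), cmp f (idm A) = f;

  tens : Obj -> Obj -> Obj;
  tensM : forall {A A' B B' : Obj}, Hom A A' -> Hom B B' -> Hom (tens A B) (tens A' B');
  tensM_id : forall A B, tensM (idm A) (idm B) = idm (tens A B);
  tensM_comp : forall A A' A'' B B' B'' (f : Hom A A') (f' : Hom A' A'')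
      (g : Hom B B') (g' : Hom B' B''),
      tensM (cmp f' f) (cmp g' g) = cmp (tensM f' g') (tensM f g);
  unitO : Obj;
  alpha : forall A B C, Hom (tens (tens A B) C) (tens A (tens B C));
  alphaInv : forall A B C, Hom (tens A (tens B C)) (tens (tens A B) C);
  alpha_inv1 : forall A B C, cmp (alphaInv A B C) (alpha A B C) = idm _;
  alpha_inv2 : forall A B C, cmp (alpha A B C) (alphaInv A B C) = idm _;
  alpha_nat : forall A A' B B' C C' (f : Hom A A') (g : Hom B B') (h : Hom C C'),
      cmp (alpha A' B' C') (tensM (tensM f g) h)
      = cmp (tensM f (tensM g h)) (alpha A B C);
  lam : forall A, Hom (tens unitO A) A;
  lamInv : forall A, Hom A (tens unitO A);
  lam_inv1 : forall A, cmp (lamInv A) (lam A) = idm _;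
  lam_inv2 : forall A, cmp (lam A) (lamInv A) = idm _;
  lam_nat : forall A B (f : Hom A B),
      cmp (lam B) (tensM (idm unitO) f) = cmp f (lam A);
  rho : forall A, Hom (tens A unitO) A;
  rhoInv : forall A, Hom A (tens A unitO);
  rho_inv1 : forall A, cmp (rhoInv A) (rho A) = idm _;
  rho_inv2 : forall A, cmp (rho A) (rhoInv A) = idm _;
  rho_nat : forall A B (f : Hom A B),
      cmp (rho B) (tensM f (idm unitO)) = cmp f (rho A);
  gam : forall A B, Hom (tens A B) (tens B A);
  gam_invol : forall A B, cmp (gam B A) (gam A B) = idm _;
  gam_nat : forall A A' B B' (f : Hom A A') (g : Hom B B'),
      cmp (gam A' B') (tensM f g) = cmp (tensM g f) (gam A B);
  pentagon : forall A B C D,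
      cmp (alpha A B (tens C D)) (alpha (tens A B) C D)
      = cmp (tensM (idm A) (alpha B C D))
             (cmp (alpha A (tens B C) D) (tensM (alpha A B C) (idm D)));
  triangle : forall A B,
      cmp (tensM (idm A) (lam B)) (alpha A unitO B) = tensM (rho A) (idm B);
  hexagon : forall A B C,
      cmp (alpha B C A) (cmp (gam A (tens B C)) (alpha A B C))
      = cmp (tensM (idm B) (gam A C))
             (cmp (alpha B A C) (tensM (gam A B) (idm C)));

  top : Obj;
  term : forall A, Hom A top;
  term_uniq : forall A (h : Hom A top), h = term A;
  withO : Obj -> Obj -> Obj;
  pr1 : forall A B, Hom (withO A B) A;
  pr2 : forall A B, Hom (withO A B) B;
  tup : forall {C A B : Obj}, Hom C A -> Hom C B -> Hom C (withO A B);
  pr1_pair : forall C A B (f : Hom C A) (g : Hom C B), cmp (pr1 A B) (tup f g) = f;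
  pr2_pair : forall C A B (f : Hom C A) (g : Hom C B), cmp (pr2 A B) (tup f g) = g;
  pair_uniq : forall C A B (h : Hom C (withO A B)),
      tup (cmp (pr1 A B) h) (cmp (pr2 A B) h) = h;

  bang : Obj -> Obj;
  bangM : forall {A B : Obj}, Hom A B -> Hom (bang A) (bang B);
  bangM_id : forall A, bangM (idm A) = idm (bang A);
  bangM_comp : forall A B C (g : Hom B C) (f : Hom A B),
      bangM (cmp g f) = cmp (bangM g) (bangM f);
  der : forall A, Hom (bang A) A;
  dig : forall A, Hom (bang A) (bang (bang A));
  der_nat : forall A B (f : Hom A B), cmp (der B) (bangM f) = cmp f (der A);
  dig_nat : forall A B (f : Hom A B),
      cmp (dig B) (bangM f) = cmp (bangM (bangM f)) (dig A);
  comonad_1 : forall A, cmp (der (bang A)) (dig A) = idm (bang A);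
  comonad_2 : forall A, cmp (bangM (der A)) (dig A) = idm (bang A);
  comonad_3 : forall A, cmp (dig (bang A)) (dig A) = cmp (bangM (dig A)) (dig A);

  (* Seely isomorphisms: (!, m0, m2) is a symmetric monoidal functor
     (L, &, top) -> (L, tensor, unit), compatible with dig *)
  m0 : Hom unitO (bang top);
  m0Inv : Hom (bang top) unitO;
  m0_inv1 : cmp m0Inv m0 = idm unitO;
  m0_inv2 : cmp m0 m0Inv = idm (bang top);
  m2 : forall A B, Hom (tens (bang A) (bang B)) (bang (withO A B));
  m2Inv : forall A B, Hom (bang (withO A B)) (tens (bang A) (bang B));
  m2_inv1 : forall A B, cmp (m2Inv A B) (m2 A B) = idm _;
  m2_inv2 : forall A B, cmp (m2 A B) (m2Inv A B) = idm _;
  m2_nat : forall A A' B B' (f : Hom A A') (g : Hom B B'),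
      cmp (m2 A' B') (tensM (bangM f) (bangM g))
      = cmp (bangM (tup (cmp f (pr1 A B)) (cmp g (pr2 A B)))) (m2 A B);
  m2_assoc : forall A B C,
      cmp (bangM (tup (cmp (pr1 A B) (pr1 (withO A B) C))
                        (tup (cmp (pr2 A B) (pr1 (withO A B) C))
                              (pr2 (withO A B) C))))
           (cmp (m2 (withO A B) C) (tensM (m2 A B) (idm (bang C))))
      = cmp (m2 A (withO B C))
             (cmp (tensM (idm (bang A)) (m2 B C)) (alpha (bang A) (bang B) (bang C)));
  m2_unitl : forall A,
      cmp (bangM (pr2 top A)) (cmp (m2 top A) (tensM m0 (idm (bang A))))
      = lam (bang A);
  m2_unitr : forall A,
      cmp (bangM (pr1 A top)) (cmp (m2 A top) (tensM (idm (bang A)) m0))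
      = rho (bang A);
  m2_sym : forall A B,
      cmp (bangM (tup (pr2 A B) (pr1 A B))) (m2 A B)
      = cmp (m2 B A) (gam (bang A) (bang B));
  m2_dig : forall A B,
      cmp (bangM (tup (bangM (pr1 A B)) (bangM (pr2 A B))))
           (cmp (dig (withO A B)) (m2 A B))
      = cmp (m2 (bang A) (bang B)) (tensM (dig A) (dig B));
  m0_dig : cmp (bangM (term (bang top))) (cmp (dig top) m0) = m0;

  zero : forall A B, Hom A B;
  zero_compl : forall A B C (f : Hom A B), cmp (zero B C) f = zero A C;
  zero_compr : forall A B C (g : Hom B C), cmp g (zero A B) = zero A C;
  zero_tensl : forall A A' B B' (g : Hom B B'), tensM (zero A A') g = zero _ _;
  zero_tensr : forall A A' B B' (f : Hom A A'), tensM f (zero B B') = zero _ _;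

  SO : Obj -> Obj;
  SM : forall {A B : Obj}, Hom A B -> Hom (SO A) (SO B);
  SM_id : forall A, SM (idm A) = idm (SO A);
  SM_comp : forall A B C (g : Hom B C) (f : Hom A B), SM (cmp g f) = cmp (SM g) (SM f);
  spi0 : forall A, Hom (SO A) A;
  spi1 : forall A, Hom (SO A) A;
  ssig : forall A, Hom (SO A) A;
  spi0_nat : forall A B (f : Hom A B), cmp (spi0 B) (SM f) = cmp f (spi0 A);
  spi1_nat : forall A B (f : Hom A B), cmp (spi1 B) (SM f) = cmp f (spi1 A);
  ssig_nat : forall A B (f : Hom A B), cmp (ssig B) (SM f) = cmp f (ssig A);
  spi_monic : forall A B (h h' : Hom A (SO B)),
      cmp (spi0 B) h = cmp (spi0 B) h' -> cmp (spi1 B) h = cmp (spi1 B) h' -> h = h'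
}.

Arguments Hom : clear implicits.
Arguments cmp {p A B C}.
Arguments tensM {p A A' B B'}.
Arguments tup {p C A B}.
Arguments bangM {p A B}.
Arguments SM {p A B}.
Arguments idm {p}.
Arguments zero {p}.
Arguments der {p}.
Arguments dig {p}.
Arguments m2 {p}.
Arguments spi0 {p}.
Arguments spi1 {p}.
Arguments ssig {p}.

Definition sum_is (L : PreSRC) (A B : Obj L) (f0 f1 g : Hom L A B) : Prop :=
  exists h : Hom L A (SO B),
    cmp (spi0 B) h = f0 /\ cmp (spi1 B) h = f1 /\ cmp (ssig B) h = g.

Definition summable (L : PreSRC) (A B : Obj L) (f0 f1 : Hom L A B) : Prop :=
  exists h : Hom L A (SO B), cmp (spi0 B) h = f0 /\ cmp (spi1 B) h = f1.

(* Summable resource category: the consequences of the axioms of coherent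
   differentiation listed in the context. *)
Record SRC := {
  pre :> PreSRC;
  sum_zero : forall A B (f : Hom pre A B), sum_is (zero A B) f f;
  sum_comm : forall A B (f0 f1 g : Hom pre A B), sum_is f0 f1 g -> sum_is f1 f0 g;
  sum_assoc : forall A B (f0 f1 f2 g01 g : Hom pre A B),
      sum_is f0 f1 g01 -> sum_is g01 f2 g ->
      exists g12, sum_is f1 f2 g12 /\ sum_is f0 g12 g;
  sum_compl : forall A B C (k : Hom pre B C) (f0 f1 g : Hom pre A B),
      sum_is f0 f1 g -> sum_is (cmp k f0) (cmp k f1) (cmp k g);
  sum_compr : forall A B C (k : Hom pre A B) (f0 f1 g : Hom pre B C),
      sum_is f0 f1 g -> sum_is (cmp f0 k) (cmp f1 k) (cmp g k);
  sum_tens : forall A A' B B' (k : Hom pre A A') (f0 f1 g : Hom pre B B'),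
      sum_is f0 f1 g -> sum_is (tensM k f0) (tensM k f1) (tensM k g)
}.

(* n-ary constructions (left-nested), families indexed by nat, only the      *)
(* indices 0..n being used.                                                  *)
Section Nary.
Variable L : PreSRC.

Fixpoint prodO (n : nat) (X : nat -> Obj L) : Obj L :=
  match n with 0 => X 0 | n'.+1 => withO (prodO n' X) (X n'.+1) end.

Fixpoint prodM (n : nat) (A B : nat -> Obj L) (f : forall k, Hom L (A k) (B k))
  : Hom L (prodO n A) (prodO n B) :=
  match n with
  | 0 => f 0
  | n'.+1 => tup (cmp (prodM n' f) (pr1 _ _)) (cmp (f n'.+1) (pr2 _ _))
  end.

Fixpoint tensO (n : nat) (X : nat -> Obj L) : Obj L :=
  match n with 0 => X 0 | n'.+1 => tens (tensO n' X) (X n'.+1) end.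

Fixpoint tensMn (n : nat) (A B : nat -> Obj L) (f : forall k, Hom L (A k) (B k))
  : Hom L (tensO n A) (tensO n B) :=
  match n with
  | 0 => f 0
  | n'.+1 => tensM (tensMn n' f) (f n'.+1)
  end.

Fixpoint seely (n : nat) (X : nat -> Obj L)
  : Hom L (tensO n (fun k => bang (X k))) (bang (prodO n X)) :=
  match n with
  | 0 => idm _
  | n'.+1 => cmp (m2 (prodO n' X) (X n'.+1)) (tensM (seely n' X) (idm _))
  end.

Definition kcomp (A B C : Obj L) (g : Hom L (bang B) C) (f : Hom L (bang A) B)
  : Hom L (bang A) C := cmp g (cmp (bangM f) (dig A)).

Definition klam (A B : Obj L) (h : Hom L A B) : Hom L (bang A) B := cmp h (der A).

Definition Mop (n : nat) (X : nat -> Obj L) (Y : Obj L)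
  (l : Hom L (tensO n X) Y)
  (minv : Hom L (bang (prodO n X)) (tensO n (fun k => bang (X k))))
  : Hom L (bang (prodO n X)) Y :=
  cmp l (cmp (tensMn n (fun k => der (X k))) minv).

(* The family X with X_i replaced by Z, and the family of morphisms
   X_0, ..., X_{i-1}, f, X_{i+1}, ..., X_n (identities except f at i). *)
Definition replO (X : nat -> Obj L) (i : nat) (Z : Obj L) (k : nat) : Obj L :=
  if k =P i is ReflectT _ then Z else X k.

Definition replM (X : nat -> Obj L) (i : nat) (Z : Obj L) (f : Hom L Z (X i))
  (k : nat) : Hom L (replO X i Z k) (X k) :=
  match k =P i as r return Hom L (if r is ReflectT _ then Z else X k) (X k) with
  | ReflectT e => eq_rect i (fun j => Hom L Z (X j)) f k (esym e)
  | ReflectF _ => idm (X k)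
  end.

End Nary.
Arguments replM {L} X i {Z} f k.

(** Unfolding Kleisli composition, naturality of [der] and of the Seely
    isomorphism give
      [M(l) o_! lambda(f_0 & ... & f_n) = l o (f_0 der (x) ... (x) f_n der) o (m^n)^-1].
    Only the i-th tensor factor depends on [f_i], and it does so through
    composition with [der]; since [0] is absorbing and sums are preserved by
    composition and by [(x)] in each argument, the whole expression sends [0]
    to [0] and [f_0 + f_1] to the sum of the two values. *)

From mathcomp Require Import all_boot.

Set Implicit Arguments.
Unset Strict Implicit.
Unset Printing Implicit Defensive.

Section ResourceCategory.
Variable L : PreSRC.

Fixpoint seelyInv (n : nat) (X : nat -> Obj L)
  : Hom L (bang (prodO n X)) (tensO n (fun k => bang (X k))) :=
  match n with
  | 0 => idm _
  | n'.+1 => cmp (tensM (seelyInv n' X) (idm _)) (m2Inv (prodO n' X) (X n'.+1))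
  end.

Lemma seely_seelyInv n X : cmp (seely n X) (seelyInv n X) = idm _.
Proof.
elim: n => [|n IH] /=; first by rewrite comp_idl.
rewrite -comp_assoc (comp_assoc (tensM _ _)) -tensM_comp IH comp_idl tensM_id.
by rewrite comp_idl m2_inv2.
Qed.

Lemma seelyInv_seely n X : cmp (seelyInv n X) (seely n X) = idm _.
Proof.
elim: n => [|n IH] /=; first by rewrite comp_idl.
rewrite -comp_assoc (comp_assoc (m2Inv _ _)) m2_inv1 comp_idl -tensM_comp IH.
by rewrite comp_idl tensM_id.
Qed.

Lemma seelyInv_unique n X (minv : Hom L (bang (prodO n X)) (tensO n (fun k => bang (X k)))) :
  cmp minv (seely n X) = idm _ -> minv = seelyInv n X.
Proof.
move=> minv_l.
by rewrite -[minv]comp_idr -(seely_seelyInv n X) comp_assoc minv_l comp_idl.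
Qed.

Lemma tensMn_comp n (A B C : nat -> Obj L) (g : forall k, Hom L (B k) (C k))
  (f : forall k, Hom L (A k) (B k)) :
  tensMn n (fun k => cmp (g k) (f k)) = cmp (tensMn n g) (tensMn n f).
Proof. by elim: n => [|n IH] //=; rewrite IH tensM_comp. Qed.

Lemma tensMn_eq n (A B : nat -> Obj L) (f g : forall k, Hom L (A k) (B k)) :
  (forall k, k <= n -> f k = g k) -> tensMn n f = tensMn n g.
Proof.
elim: n => [|n IH] fg /=; first exact: fg.
by rewrite IH ?fg // => k /leqW; apply: fg.
Qed.

Lemma seely_nat n (A B : nat -> Obj L) (f : forall k, Hom L (A k) (B k)) :
  cmp (seely n B) (tensMn n (fun k => bangM (f k)))
  = cmp (bangM (prodM n f)) (seely n A).
Proof.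
elim: n => [|n IH] /=; first by rewrite comp_idl comp_idr.
rewrite -comp_assoc -tensM_comp IH comp_idl -(comp_idr (bangM (f n.+1))).
by rewrite tensM_comp comp_assoc m2_nat -!comp_assoc.
Qed.

Lemma seelyInv_nat n (A B : nat -> Obj L) (f : forall k, Hom L (A k) (B k)) :
  cmp (seelyInv n B) (bangM (prodM n f))
  = cmp (tensMn n (fun k => bangM (f k))) (seelyInv n A).
Proof.
rewrite -[LHS]comp_idr -(seely_seelyInv n A) !comp_assoc -(comp_assoc (seelyInv n B)).
by rewrite -seely_nat comp_assoc seelyInv_seely comp_idl.
Qed.

Lemma kcomp_klam A B C (g : Hom L (bang B) C) (h : Hom L A B) :
  kcomp g (klam h) = cmp g (bangM h).
Proof. by rewrite /kcomp /klam bangM_comp -comp_assoc comonad_2 comp_idr. Qed.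

Lemma Mop_kcomp_klam_prodM n (X A : nat -> Obj L) Y (l : Hom L (tensO n X) Y)
  (f : forall k, Hom L (A k) (X k)) :
  kcomp (Mop l (seelyInv n X)) (klam (prodM n f))
  = cmp l (cmp (tensMn n (fun k => cmp (f k) (der (A k)))) (seelyInv n A)).
Proof.
rewrite kcomp_klam /Mop -!comp_assoc seelyInv_nat (comp_assoc (tensMn _ _)) -tensMn_comp.
by congr (cmp l (cmp _ _)); apply: tensMn_eq => k _; apply: der_nat.
Qed.

Lemma tensMn_zero n i (A B : nat -> Obj L) (f : forall k, Hom L (A k) (B k)) :
  i <= n -> f i = zero _ _ -> tensMn n f = zero _ _.
Proof.
elim: n => [|n IH] /=; first by rewrite leqn0 => /eqP <-.
rewrite leq_eqVlt => /orP [/eqP <- ->|lt_in fi0]; first exact: zero_tensr.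
by rewrite IH ?zero_tensl.
Qed.

Lemma replM_neq (X : nat -> Obj L) i Z (f g : Hom L Z (X i)) k :
  k != i -> replM X i f k = replM X i g k.
Proof. by rewrite /replM /replO; case: (k =P i). Qed.

Lemma replM_zero_comp (X : nat -> Obj L) i Z k A (g : Hom L A (replO X i Z k)) :
  k = i -> cmp (replM X i (zero Z (X i)) k) g = zero _ _.
Proof.
move=> ki; rewrite /replM; move: g; rewrite /replO.
case: (k =P i) => // e; subst k => g.
by rewrite (eq_irrelevance e (erefl i)) zero_compl.
Qed.

End ResourceCategory.

Section SummableResourceCategory.
Variable L : SRC.

Lemma sum_tensl A A' B B' (k : Hom L B B') (f0 f1 g : Hom L A A') :
  sum_is f0 f1 g -> sum_is (tensM f0 k) (tensM f1 k) (tensM g k).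
Proof.
have swap (f : Hom L A A') : tensM f k = cmp (gam _ _) (cmp (tensM k f) (gam _ _)).
  by rewrite -gam_nat comp_assoc gam_invol comp_idl.
by move=> fg; rewrite !swap; apply/sum_compl/sum_compr/sum_tens.
Qed.

Lemma tensMn_sum n i (A B : nat -> Obj L) (f0 f1 g : forall k, Hom L (A k) (B k)) :
  i <= n -> (forall k, k != i -> f0 k = g k) -> (forall k, k != i -> f1 k = g k) ->
  sum_is (f0 i) (f1 i) (g i) ->
  sum_is (tensMn n f0) (tensMn n f1) (tensMn n g).
Proof.
elim: n => [|n IH] /=; first by rewrite leqn0 => /eqP <-.
rewrite leq_eqVlt => /orP [/eqP ->|lt_in] f0g f1g fg.
  have off_top (f : forall k, Hom L (A k) (B k)) :
      (forall k, k != n.+1 -> f k = g k) -> tensMn n f = tensMn n g.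
    by move=> fg'; apply: tensMn_eq => k le_kn; apply: fg'; rewrite neq_ltn ltnS le_kn.
  by rewrite (off_top _ f0g) (off_top _ f1g); apply: sum_tens.
have ni : n.+1 != i by rewrite neq_ltn lt_in orbT.
by rewrite f0g // f1g //; apply: sum_tensl; apply: IH.
Qed.

Lemma replM_sum_comp (X : nat -> Obj L) i Z (f0 f1 g : Hom L Z (X i)) k A
  (h : Hom L A (replO X i Z k)) :
  k = i -> sum_is f0 f1 g ->
  sum_is (cmp (replM X i f0 k) h) (cmp (replM X i f1 k) h) (cmp (replM X i g k) h).
Proof.
move=> ki fg; rewrite /replM; move: h; rewrite /replO.
case: (k =P i) => // e; subst k => h.
by rewrite (eq_irrelevance e (erefl i)); apply: sum_compr.
Qed.

End SummableResourceCategory.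

Theorem mainTheorem11 (L : SRC) (n : nat) (X : nat -> Obj L) (Y : Obj L)
  (l : Hom L (tensO n X) Y)
  (minv : Hom L (bang (prodO n X)) (tensO n (fun k => bang (X k))))
  (minv_l : cmp minv (seely n X) = idm _)
  (minv_r : cmp (seely n X) minv = idm _)
  (i : nat) (hi : i <= n) (Z : Obj L) :
  kcomp (Mop l minv) (klam (prodM n (replM X i (zero Z (X i))))) = zero _ _
  /\
  (forall (f0 f1 : Hom L Z (X i)) (h : Hom L Z (SO (X i))),
     cmp (spi0 (X i)) h = f0 -> cmp (spi1 (X i)) h = f1 ->
     sum_is (kcomp (Mop l minv) (klam (prodM n (replM X i f0))))
            (kcomp (Mop l minv) (klam (prodM n (replM X i f1))))
            (kcomp (Mop l minv) (klam (prodM n (replM X i (cmp (ssig (X i)) h)))))).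
Proof.
rewrite (seelyInv_unique minv_l); split.
  rewrite Mop_kcomp_klam_prodM (tensMn_zero hi) ?zero_compl ?zero_compr //.
  exact: replM_zero_comp.
move=> f0 f1 h h0 h1; rewrite !Mop_kcomp_klam_prodM.
apply/sum_compl/sum_compr/(tensMn_sum hi) => [k ki|k ki|].
- by rewrite (replM_neq _ (cmp (ssig (X i)) h) ki).
- by rewrite (replM_neq _ (cmp (ssig (X i)) h) ki).
- by apply: replM_sum_comp => //; exists h.
Qed.
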